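(* Let $G=(V_1,V_2,E)$ be a bipartite graph with $n_1=|V_1|\ge1$, $n_2=|V_2|$, $n_2\ge n_1$, and $d=|E|$ edges, and let $n_2^{(\mathrm{odd})}\le n_2$ be the number of vertices of odd degree in $V_2$. Then there exists a collection of edge-disjoint simple cycles in $G$, each of length at most $2\lfloor 2\log_2(n_1)\rfloor$, whose union contains all but at most $\min\{2n_1+n_2,\ 4n_1+n_2^{(\mathrm{odd})}\}$ edges of $G$.
   Context: Graphs are finite and simple; the length of a cycle is its number of edges. *)

From mathcomp Require Import all_boot.
Set Implicit Arguments. Unset Strict Implicit. Unset Printing Implicit Defensive.

(* A bipartite graph G = (V1, V2, E) with parts the finite types T1, T2 and
   edge set E : {set T1 * T2} (an edge is a pair (x, y), x in V1, y in V2). *)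

Definition deg2 (T1 T2 : finType) (E : {set T1 * T2}) (y : T2) : nat :=
  #|[set x : T1 | (x, y) \in E]|.

Definition n2odd (T1 T2 : finType) (E : {set T1 * T2}) : nat :=
  #|[set y : T2 | odd (deg2 E y)]|.

(* The edge set of the closed walk u_0 w_0 u_1 w_1 ... u_{k-1} w_{k-1} u_0
   (u_i in V1, w_i in V2), indices mod k. *)
Definition cyc_edges (T1 T2 : finType) (k : nat) (u : 'I_k -> T1) (w : 'I_k -> T2)
  : {set T1 * T2} :=
  [set (u i, w i) | i : 'I_k] :|: [set (u (ordS i), w i) | i : 'I_k].

(* C is (the edge set of) a simple cycle of G of length 2k: k >= 2 distinct
   vertices of V1 and k distinct vertices of V2 alternating, all edges in E. *)
Definition bip_cycle (T1 T2 : finType) (E : {set T1 * T2}) (C : {set T1 * T2})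
  (k : nat) : Prop :=
  2 <= k /\ exists (u : 'I_k -> T1) (w : 'I_k -> T2),
    injective u /\ injective w /\ C = cyc_edges u w /\ C \subset E.

(* Peel off short cycles greedily.  While the remaining edge set has more than
   2 n1 + a2 edges, where a2 counts the non-isolated vertices of V2, deleting
   V1-vertices of degree 1 or 2 and V2-vertices of degree 1 keeps |F| > 2 a1 + a2
   and ends in a nonempty subgraph whose V1-degrees are >= 3 and V2-degrees >= 2.
   There, non-backtracking walks from a V1-vertex number at least 3 * 2^j after
   2 (j + 1) steps.  With r = floor(log2 n1), the walks of even length <= 2r
   outnumber the V1-vertices, so two of them share their endpoint and close a
   cycle of length <= 4r <= 2 floor(2 log2 n1).  Deleting a cycle preserves the
   parity of every V2-degree, and at the end |R| <= 2 n1 + a2 with a2 <= n2 and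
   2 a2 <= |R| + n2odd. *)

From mathcomp Require Import all_boot zify.
Set Implicit Arguments. Unset Strict Implicit. Unset Printing Implicit Defensive.

Lemma pigeonhole_map (T : eqType) (U : finType) (f : T -> U) (A : {pred U}) s :
  uniq s -> {in s, forall x, f x \in A} -> #|A| < size s ->
  exists x y, [/\ x \in s, y \in s, x != y & f x = f y].
Proof.
move=> us sA ltAs; case: s us sA ltAs => [//|x0 s'] us sA ltAs.
have /(uniqPn (f x0)) [i [j [ltij ltj]]] : ~~ uniq (map f (x0 :: s')).
  apply: contraTN ltAs => uf; rewrite -leqNgt -(size_map f) cardE.
  by apply: uniq_leq_size uf _ => _ /mapP[x xs ->]; rewrite mem_enum sA.
rewrite size_map in ltj; have lti := ltn_trans ltij ltj.
rewrite !(nth_map x0) // => eq_f.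
exists (nth x0 (x0 :: s') i), (nth x0 (x0 :: s') j).
by rewrite !mem_nth // nth_uniq // neq_ltn ltij.
Qed.

Lemma cycle_nth_succ (T : Type) (e : rel T) x0 c j :
  cycle e c -> j < size c -> e (nth x0 c j) (nth x0 c (j.+1 %% size c)).
Proof.
case: c => [//|x s] /(pathP x0) adj lt_j; move: (adj j).
rewrite size_rcons => /(_ lt_j); rewrite -rcons_cons !nth_rcons /= lt_j.
case: (ltngtP j (size s)) lt_j => [lt_js _|lt_sj|-> _]; first by rewrite modn_small.
  by rewrite ltnS leqNgt lt_sj.
by rewrite modnn.
Qed.

Lemma leq_trunc_logX p n k : 1 < p -> 0 < n -> k * trunc_log p n <= trunc_log p (n ^ k).
Proof.
move=> p_gt1 n_gt0; case: k => // k; apply: trunc_log_max => //.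
by rewrite mulnC expnM leq_exp2r ?trunc_logP.
Qed.

Section CyclesFromWalks.
Variables (V : eqType) (e : rel V).

Fixpoint nonbacktracking (s : seq V) : bool :=
  if s is a :: (_ :: c :: _) as t then (a != c) && nonbacktracking t else true.

Definition short_cycle (L : nat) (c : seq V) :=
  [/\ uniq c, cycle e c, 2 < size c & size c <= L].

Lemma short_cycle_le L L' c : L <= L' -> short_cycle L c -> short_cycle L' c.
Proof. by move=> LL' [? ? ? Lc]; split=> //; apply: leq_trans LL'. Qed.

Lemma nonbacktracking_behead x t : nonbacktracking (x :: t) -> nonbacktracking t.
Proof. by case: t => // y [|z u] //= /andP[]. Qed.

Hypotheses (e_sym : symmetric e) (e_irr : irreflexive e).

Lemma nonbacktracking_path_cycle x t :
  path e x t -> nonbacktracking (x :: t) -> ~~ uniq (x :: t) ->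
  exists c, short_cycle (size t) c.
Proof.
elim: t x => [|y t IH] x // pxyt nb.
have [uyt|nuyt] := boolP (uniq (y :: t)); last first.
  have [c cyc] := IH y (path_sorted pxyt) (nonbacktracking_behead nb) nuyt.
  by exists c; apply: short_cycle_le cyc.
rewrite cons_uniq uyt andbT negbK.
move=> /splitPr split_yt; case: split_yt uyt pxyt nb => s1 s2.
rewrite cat_uniq cat_path => /and3P[us1 xs1 _] /andP[ps1 /andP[ex _]] nb.
exists (x :: s1); split.
- by rewrite /= us1 andbT; apply: contra xs1 => /= ->.
- by rewrite /= rcons_path ps1.
- case: s1 {us1 xs1 ps1} ex nb => [|z [|? ?]] //=; first by rewrite e_irr.
  by rewrite eqxx.
- by rewrite size_cat /= addnS ltnS leq_addr.
Qed.

Lemma distinct_paths_cycle z p q :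
  path e z p -> path e z q -> uniq (z :: p) -> uniq (z :: q) ->
  last z p = last z q -> p != q -> exists c, short_cycle (size p + size q) c.
Proof.
elim: p z q => [|a p IH] z [|b q] //.
- by move=> _ _ _ /andP[zq _] /= El; rewrite El mem_last in zq.
- by move=> _ _ /andP[zp _] _ /= El; rewrite -El mem_last in zp.
have [<-|neq_ab] := eqVneq a b.
  move=> /andP[_ pa] /andP[_ pb] /andP[_ ua] /andP[_ ub] El neq.
  have [|c cyc] := IH a q pa pb ua ub El; first by apply: contraNneq neq => ->.
  by exists c; apply: short_cycle_le cyc; rewrite /=; lia.
move=> pp pq up uq El _.
(* Go out along p to the first vertex z' of q lying on p, and back along q. *)
have meet : has (mem (a :: p)) (b :: q).
  by apply/hasP; exists (last b q); rewrite ?mem_last // -[last b q]El /= mem_last.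
have neq_head : head z (a :: p) != head z (b :: q) := neq_ab.
move: {IH El neq_ab} pq uq neq_head.
case: (split_find meet) => z' q1 q2 z'p q1p pq uq neq_head.
case/splitPr: z'p pp up neq_head q1p => p1 p2 pp up neq_head q1p.
exists (z :: p1 ++ z' :: rev q1); split.
- rewrite -cat_rcons -cat_cons cat_uniq rev_uniq has_rev.
  move: up; rewrite -cat_rcons -cat_cons cat_uniq => /andP[-> _].
  move: uq; rewrite cat_rcons -cat_cons cat_uniq cons_uniq => /andP[/andP[zq1 ->] _].
  rewrite andbT; apply/hasPn => x xq1; rewrite inE mem_rcons negb_or.
  rewrite (contraNneq _ zq1) => [|<- //]; apply: contra (hasPn q1p x xq1).
  by rewrite inE /= mem_cat inE => /orP[->|->]; rewrite ?orbT.
- move: pp pq; rewrite !cat_path => /andP[pp1 /andP[ep _]] /andP[pq1 _].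
  rewrite /= rcons_cat cat_path pp1 /= ep /= -rev_cons.
  move: pq1; rewrite -rev_path belast_rcons last_rcons.
  by rewrite (@eq_path _ _ e) // => x y; rewrite e_sym.
- case: p1 q1 neq_head {pp up q1p pq uq} => [|? ?] [|? ?] /= => [|_|_|_];
    by rewrite ?eqxx ?size_cat ?size_rev //=; lia.
- by rewrite /= !size_cat /= size_rcons size_rev; lia.
Qed.

Lemma nonbacktracking_walks_cycle h t1 t2 :
  path e h t1 -> path e h t2 -> nonbacktracking (h :: t1) -> nonbacktracking (h :: t2) ->
  last h t1 = last h t2 -> t1 != t2 -> exists c, short_cycle (size t1 + size t2) c.
Proof.
move=> p1 p2 nb1 nb2 El neq.
have [u1|nu1] := boolP (uniq (h :: t1)); last first.
  have [c cyc] := nonbacktracking_path_cycle p1 nb1 nu1.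
  by exists c; apply: short_cycle_le cyc; apply: leq_addr.
have [u2|nu2] := boolP (uniq (h :: t2)); last first.
  have [c cyc] := nonbacktracking_path_cycle p2 nb2 nu2.
  by exists c; apply: short_cycle_le cyc; apply: leq_addl.
exact: distinct_paths_cycle p1 p2 u1 u2 El neq.
Qed.

End CyclesFromWalks.

Section NonBacktrackingWalks.
Variables (V : finType) (e : rel V) (v0 : V) (side : pred V).
Hypotheses (e_sym : symmetric e) (e_irr : irreflexive e).
Hypothesis side_adj : forall a b, e a b -> side b = ~~ side a.
Hypothesis side_v0 : side v0.
Hypothesis v0_adj : exists z, e v0 z.
Hypothesis min_degree :
  forall v, (exists z, e v z) -> (if side v then 3 else 2) <= #|e v|.

(* A walk v0, ..., h is stored reversed, as the sequence h :: ... :: [:: v0]. *)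
Definition extends_walk (s : seq V) : pred V := fun z =>
  e (head v0 s) z && (if s is _ :: b :: _ then z != b else true).

Fixpoint extend_walks (l : seq (seq V)) : seq (seq V) :=
  if l is s :: l' then [seq z :: s | z <- enum (extends_walk s)] ++ extend_walks l'
  else [::].

Fixpoint nb_walks (m : nat) : seq (seq V) :=
  if m is m'.+1 then extend_walks (nb_walks m') else [:: [:: v0]].

Lemma extend_walksP l x :
  reflect (exists s z, [/\ s \in l, extends_walk s z & x = z :: s]) (x \in extend_walks l).
Proof.
elim: l => [|s l IH] /=; first by right=> [[s [z []]]].
rewrite mem_cat; apply: (iffP orP) => [[/mapP[z]|/IH]|].
- by rewrite mem_enum => ext ->; exists s, z; rewrite mem_head.
- by move=> [s' [z [s'l ext ->]]]; exists s', z; rewrite inE s'l orbT.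
move=> [s' [z [/predU1P[-> | s'l] ext Ex]]].
  by left; rewrite Ex; apply: map_f; rewrite mem_enum.
by right; apply/IH; exists s', z.
Qed.

Lemma extend_walks_uniq l : uniq l -> uniq (extend_walks l).
Proof.
elim: l => [|s l IH] //= /andP[sl ul].
rewrite cat_uniq IH // andbT map_inj_uniq ?enum_uniq => [|? ? []//].
apply/hasPn => _ /extend_walksP[s' [z [s'l _ ->]]].
by apply/mapP => -[z' _ [_ Es]]; move: sl; rewrite -Es s'l.
Qed.

Lemma size_extend_walks K l :
  {in l, forall s, K <= #|extends_walk s|} -> K * size l <= size (extend_walks l).
Proof.
elim: l => [|s l IH] Kl /=; first by rewrite muln0.
rewrite size_cat size_map -cardE mulnS leq_add ?Kl ?mem_head //.
by apply: IH => s' s'l; rewrite Kl // inE s'l orbT.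
Qed.

Lemma nb_walks_uniq m : uniq (nb_walks m).
Proof. by elim: m => //= m; apply: extend_walks_uniq. Qed.

Lemma nb_walksP m s : s \in nb_walks m ->
  [/\ size s = m.+1, last v0 s = v0, path e (head v0 s) (behead s), nonbacktracking s
    & side (head v0 s) = ~~ odd m].
Proof.
elim: m s => [|m IH] s /=; first by rewrite inE => /eqP ->.
case/extend_walksP => s' [z [/IH[size_s' last_s' path_s' nb_s' side_s'] ext ->]].
case: s' ext size_s' last_s' path_s' nb_s' side_s' => [//|a t] /= /andP[eaz zt].
move=> [->] -> pat nbat side_a.
rewrite /= in eaz; split=> //=; first by rewrite e_sym eaz.
  by case: t zt {pat side_a} nbat => //= b t -> ->.
by rewrite (side_adj eaz) side_a.
Qed.

Lemma card_extends_walk m s : s \in nb_walks m ->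
  (if m is 0 then 3 else if odd m then 1 else 2) <= #|extends_walk s|.
Proof.
case: m => [|m] ms.
  move: ms; rewrite inE => /eqP ->.
  have := min_degree v0_adj; rewrite side_v0 => /leq_trans; apply.
  by apply: subset_leq_card; apply/subsetP => z; rewrite !unfold_in /= andbT.
have [size_s _ path_s _ side_s] := nb_walksP ms.
case: s size_s path_s side_s {ms} => [|h [|b t]] //= _ /andP[ehb _] side_h.
have := min_degree (ex_intro _ b ehb); rewrite side_h (cardD1x ehb).
have -> : #|[pred z | e h z & z != b]| = #|extends_walk [:: h, b & t]| by apply: eq_card.
by case: (odd m) => /=; lia.
Qed.

Lemma size_nb_walks j : 3 * 2 ^ j <= size (nb_walks (2 * j.+1)).
Proof.
have step m := size_extend_walks (@card_extends_walk m).
elim: j => [|j IH]; first by move: (step 0) (step 1); rewrite muln1 /= !mul1n; lia.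
move: IH (step (2 * j).+2) (step (2 * j).+3).
rewrite !mulnS !add2n /= !oddM /= !mul1n expnS; lia.
Qed.

Fixpoint even_walks (r : nat) : seq (seq V) :=
  if r is r'.+1 then nb_walks (2 * r) ++ even_walks r' else nb_walks 0.

Lemma mem_even_walks r s : s \in even_walks r -> exists2 j, j <= r & s \in nb_walks (2 * j).
Proof.
elim: r => [|r IH] /=; first by exists 0.
by rewrite mem_cat => /orP[|/IH[j /leqW]]; [exists r.+1 | exists j].
Qed.

Lemma even_walks_uniq r : uniq (even_walks r).
Proof.
elim: r => [|r IH]; first exact: nb_walks_uniq.
rewrite cat_uniq nb_walks_uniq IH andbT; apply/hasPn => s /mem_even_walks[j le_jr].
move=> /nb_walksP[size_s _ _ _ _]; apply/negP => /nb_walksP[size_s' _ _ _ _].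
by move: size_s'; rewrite size_s; lia.
Qed.

Lemma size_even_walks r : 3 * 2 ^ r <= size (even_walks r) + 2.
Proof.
elim: r => [|r IH] //; have := size_nb_walks r.
change (even_walks r.+1) with (nb_walks (2 * r.+1) ++ even_walks r).
by rewrite size_cat expnS; lia.
Qed.

Lemma short_cycle_of_walks r :
  #|side| + 2 < 3 * 2 ^ r -> exists c, short_cycle e (4 * r) c.
Proof.
move=> large.
have walk s : s \in even_walks r -> exists h t,
    s = h :: t /\ [/\ size t <= 2 * r, path e h t, nonbacktracking s, last h t = v0 & side h].
  case/mem_even_walks=> j le_jr /nb_walksP[].
  case: s => [//|h t] /= [size_t] last_t path_t nb_s side_h.
  by exists h, t; split; rewrite // size_t leq_mul2l le_jr side_h oddM.
have heads_side : {in even_walks r, forall s, head v0 s \in side}.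
  by move=> s /walk[h [t [-> [_ _ _ _]]]].
have many_walks : #|side| < size (even_walks r) by have := size_even_walks r; lia.
have [s1 [s2 [s1r s2r neq_s Eh]]] := pigeonhole_map (even_walks_uniq r) heads_side many_walks.
move: Eh neq_s.
have [h [t1 [-> [size_t1 path_t1 nb_s1 last_t1 _]]]] := walk s1 s1r.
have [h' [t2 [-> [size_t2 path_t2 nb_s2 last_t2 _]]]] := walk s2 s2r.
move=> /= Eh neq_t; rewrite -Eh in path_t2 nb_s2 last_t2 neq_t.
have El : last h t1 = last h t2 by rewrite last_t1 last_t2.
have neq12 : t1 != t2 by move: neq_t; apply: contra_neq => ->.
have [c cyc] := nonbacktracking_walks_cycle e_sym e_irr path_t1 path_t2 nb_s1 nb_s2 El neq12.
by exists c; apply: short_cycle_le cyc; lia.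
Qed.

End NonBacktrackingWalks.

Definition deg1 (T1 T2 : finType) (E : {set T1 * T2}) (x : T1) : nat :=
  #|[set y : T2 | (x, y) \in E]|.

Section BipartiteRelation.
Variables (T1 T2 : finType) (F : {set T1 * T2}).

Definition bip_rel : rel (T1 + T2) := fun a b =>
  match a, b with
  | inl x, inr y | inr y, inl x => (x, y) \in F
  | _, _ => false
  end.

Lemma bip_rel_sym : symmetric bip_rel.
Proof. by case=> [x|y] [x'|y']. Qed.

Lemma bip_rel_irr : irreflexive bip_rel.
Proof. by case. Qed.

Lemma bip_rel_is_inl a b : bip_rel a b -> is_inl b = ~~ is_inl a.
Proof. by case: a b => [x|y] [x'|y']. Qed.

Lemma card_bip_rel_inl x : #|bip_rel (inl x)| = deg1 F x.
Proof.
rewrite /deg1 -(card_imset _ (@inr_inj T1 T2)); apply: eq_card => -[x'|y].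
  by rewrite unfold_in; apply/esym/imsetP => -[].
by rewrite mem_imset ?inE //; apply: inr_inj.
Qed.

Lemma card_bip_rel_inr y : #|bip_rel (inr y)| = deg2 F y.
Proof.
rewrite /deg2 -(card_imset _ (@inl_inj T1 T2)); apply: eq_card => -[x|y'].
  by rewrite mem_imset ?inE //; apply: inl_inj.
by rewrite unfold_in; apply/esym/imsetP => -[].
Qed.

Section AlternatingCycle.
Variables (v0 : T1 + T2) (c : seq (T1 + T2)).
Hypotheses (cc : cycle bip_rel c) (c0_inl : is_inl (nth v0 c 0)).

Lemma is_inl_nth_cycle j : j < size c -> is_inl (nth v0 c j) = ~~ odd j.
Proof.
elim: j => [//|j IH] lt_j; have := cycle_nth_succ v0 cc (ltnW lt_j).
by rewrite modn_small // => /bip_rel_is_inl ->; rewrite IH ?(ltnW lt_j).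
Qed.

Lemma even_size_cycle : ~~ odd (size c).
Proof.
case E: (size c) => [//|n]; have lt_n : n < size c by rewrite E.
have := cycle_nth_succ v0 cc lt_n; rewrite E modnn => /bip_rel_is_inl.
by rewrite c0_inl is_inl_nth_cycle // negbK /= => <-.
Qed.

End AlternatingCycle.

Lemma bip_cycle_of_cycle c : uniq c -> cycle bip_rel c -> 2 < size c ->
  exists C k, bip_cycle F C k /\ 2 * k = size c.
Proof.
wlog [x0 [c' Ec]] : c / exists x0 c', c = inl x0 :: c'.
  move=> inl_case; case: c => [//|[x0|y0] c']; first by apply: inl_case; exists x0, c'.
  case: c' => [//|[x1|y1] c'']; last by move=> _ /andP[].
  rewrite -(rot_uniq 1) -(rot_cycle 1) -(size_rot 1) rot1_cons.
  by apply: inl_case; exists x1, (rcons c'' (inr y0)).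
move=> uc cc size_c; have c0_inl : is_inl (nth (inl x0) c 0) by rewrite Ec.
have side := is_inl_nth_cycle cc c0_inl.
have [k size_c2k] : exists k, size c = 2 * k.
  exists (size c)./2.
  by rewrite mul2n -[LHS]odd_double_half (negPf (even_size_cycle cc c0_inl)).
have [y0 _] : exists y0, nth (inl x0) c 1 = inr y0.
  by case: (nth (inl x0) c 1) (side 1 (ltnW size_c)) => [//|y0]; exists y0.
(* c = [:: inl (u 0); inr (w 0); inl (u 1); ...]; x0 and y0 are dummy defaults. *)
pose u (i : 'I_k) := if nth (inl x0) c (2 * i) is inl x then x else x0.
pose w (i : 'I_k) := if nth (inl x0) c (2 * i).+1 is inr y then y else y0.
have lt_2i (i : 'I_k) : 2 * i < size c by rewrite size_c2k ltn_pmul2l.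
have lt_2i1 (i : 'I_k) : (2 * i).+1 < size c by have := ltn_ord i; lia.
have nth_u (i : 'I_k) : nth (inl x0) c (2 * i) = inl (u i).
  by rewrite /u; case: (nth _ _ _) (side _ (lt_2i i)) => //= ?; rewrite oddM.
have nth_w (i : 'I_k) : nth (inl x0) c (2 * i).+1 = inr (w i).
  by rewrite /w; case: (nth _ _ _) (side _ (lt_2i1 i)) => //= ?; rewrite oddM.
exists (cyc_edges u w), k; split=> //; split; first lia.
exists u, w; split; [|split; [|split=> //]].
- move=> i j Euij; apply/val_inj/eqP; rewrite -(eqn_pmul2l (isT : 0 < 2)).
  by rewrite -(nth_uniq (inl x0) (lt_2i i) (lt_2i j) uc) !nth_u Euij.
- move=> i j Ewij; apply/val_inj/eqP; rewrite -(eqn_pmul2l (isT : 0 < 2)) -eqSS.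
  by rewrite -(nth_uniq (inl x0) (lt_2i1 i) (lt_2i1 j) uc) !nth_w Ewij.
apply/subsetP => _ /setUP[] /imsetP[i _ ->].
  by have := cycle_nth_succ (inl x0) cc (lt_2i i); rewrite modn_small // nth_u nth_w.
have := cycle_nth_succ (inl x0) cc (lt_2i1 i); rewrite nth_w size_c2k.
have -> : (2 * i).+2 = 2 * i.+1 by rewrite mulnS.
by rewrite -muln_modr (nth_u (ordS i)).
Qed.

End BipartiteRelation.

Lemma card_is_inl (T1 T2 : finType) : #|@is_inl T1 T2| = #|T1|.
Proof.
rewrite -cardsT -(card_imset _ (@inl_inj T1 T2)); apply: eq_card => -[x|y].
  by rewrite mem_imset ?inE //; apply: inl_inj.
by rewrite unfold_in; apply/esym/imsetP => -[].
Qed.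

Definition core_degrees (T1 T2 : finType) (F : {set T1 * T2}) :=
  forall x y, (x, y) \in F -> 2 < deg1 F x /\ 1 < deg2 F y.

Lemma short_bip_cycle (T1 T2 : finType) (F : {set T1 * T2}) x0 y0 :
  core_degrees F -> (x0, y0) \in F ->
  exists C k, bip_cycle F C k /\ k <= trunc_log 2 (#|T1| ^ 2).
Proof.
move=> degF Fxy0; set r := trunc_log 2 #|T1|.
have n1_gt1 : 1 < #|T1| by apply: leq_trans (degF _ _ Fxy0).2 (max_card _).
have r_gt0 : 0 < r by rewrite trunc_log_gt0.
have := trunc_log_ltn #|T1| (isT : 1 < 2); rewrite -/r expnS => n1_lt.
have two_le : 2 <= 2 ^ r by rewrite -{1}(expn1 2) leq_exp2l.
have [c cyc] : exists c, short_cycle (bip_rel F) (4 * r) c.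
  apply: (short_cycle_of_walks (v0 := inl x0) (side := is_inl)).
  - exact: bip_rel_sym.
  - exact: bip_rel_irr.
  - exact: bip_rel_is_inl.
  - by [].
  - by exists (inr y0).
  - case=> [x|y] [[x'|y'] //= Fv].
      by rewrite card_bip_rel_inl; case: (degF _ _ Fv).
    by rewrite card_bip_rel_inr; case: (degF _ _ Fv).
  - by rewrite card_is_inl; lia.
case: cyc => uc cc c_gt2 c_le.
have [C [k [bipC size_k]]] := bip_cycle_of_cycle uc cc c_gt2.
exists C, k; split=> //; apply: (leq_trans _ (leq_trunc_logX 2 _ _)) => //; lia.
Qed.

Section Pruning.
Variables T1 T2 : finType.
Implicit Types F G : {set T1 * T2}.

Definition vertices1 F := [set x | 0 < deg1 F x].
Definition vertices2 F := [set y | 0 < deg2 F y].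

(* The invariant of the pruning: it survives the deletion of a V1-vertex of
   degree 1 or 2 and of a V2-vertex of degree 1, and forces F to be nonempty. *)
Definition dense F := 2 * #|vertices1 F| + #|vertices2 F| < #|F|.

Lemma deg1S F G x : F \subset G -> deg1 F x <= deg1 G x.
Proof. by move=> /subsetP FG; apply/subset_leq_card/subsetP => y; rewrite !inE => /FG. Qed.

Lemma deg2S F G y : F \subset G -> deg2 F y <= deg2 G y.
Proof. by move=> /subsetP FG; apply/subset_leq_card/subsetP => x; rewrite !inE => /FG. Qed.

Lemma vertices1S F G : F \subset G -> vertices1 F \subset vertices1 G.
Proof. by move=> FG; apply/subsetP => x; rewrite !inE => /leq_trans; apply; apply: deg1S. Qed.

Lemma vertices2S F G : F \subset G -> vertices2 F \subset vertices2 G.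
Proof. by move=> FG; apply/subsetP => y; rewrite !inE => /leq_trans; apply; apply: deg2S. Qed.

Lemma deg1_gt0 F x y : (x, y) \in F -> 0 < deg1 F x.
Proof. by move=> Fxy; apply/card_gt0P; exists y; rewrite inE. Qed.

Lemma deg2_gt0 F x y : (x, y) \in F -> 0 < deg2 F y.
Proof. by move=> Fxy; apply/card_gt0P; exists x; rewrite inE. Qed.

Lemma dense_delete1 F x : 0 < deg1 F x < 3 -> dense F -> dense (F :\: [set p | p.1 == x]).
Proof.
case/andP=> deg_gt0 deg_lt3; rewrite /dense; set F' := F :\: _.
have card_F : #|F| = deg1 F x + #|F'|.
  rewrite -(cardsID [set p | p.1 == x] F) /deg1; congr (_ + _).
  have -> : F :&: [set p | p.1 == x] = pair x @: [set y | (x, y) \in F].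
    apply/setP => -[a b]; rewrite !inE /=; apply/idP/imsetP => [/andP[Fab /eqP Eax]|[y]].
      by exists b; rewrite ?inE -?Eax.
    by rewrite inE => Fxy [-> ->]; rewrite Fxy eqxx.
  by rewrite card_imset // => ? ? [].
have : vertices1 F' \proper vertices1 F.
  apply/properP; split; first exact/vertices1S/subsetDl.
  exists x; rewrite !inE // -leqNgt leqn0 cards_eq0; apply/eqP/setP => y.
  by rewrite !inE eqxx.
move/proper_card; have := subset_leq_card (vertices2S (subsetDl F [set p | p.1 == x])).
by rewrite -/F'; lia.
Qed.

Lemma dense_delete2 F x y : deg2 F y = 1 -> (x, y) \in F -> dense F -> dense (F :\ (x, y)).
Proof.
move=> deg_y Fxy; rewrite /dense; set F' := F :\ (x, y).
have card_F : #|F| = #|F'|.+1 by rewrite (cardsD1 (x, y) F) Fxy.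
have : vertices2 F' \proper vertices2 F.
  apply/properP; split; first exact/vertices2S/subsetDl.
  exists y; rewrite !inE ?deg_y // -leqNgt leqn0 cards_eq0; apply/eqP/setP => x'.
  have /cards1P[z Ez] : deg2 F y == 1 by rewrite deg_y.
  have only_z x1 : (x1, y) \in F -> x1 = z.
    by move=> Fx1y; apply/set1P; rewrite -Ez inE.
  rewrite !inE; apply/negP => /andP[+ /only_z Ex'].
  by rewrite Ex' -(only_z _ Fxy) eqxx.
move/proper_card; have := subset_leq_card (vertices1S (subsetDl F [set (x, y)])).
by rewrite -/F'; lia.
Qed.

Lemma dense_shrink F :
  dense F -> core_degrees F \/ exists2 G : {set T1 * T2}, G \proper F & dense G.
Proof.
move=> dF; have [/existsP[x /andP[deg_gt0 deg_lt3]]|no1] := boolP [exists x, 0 < deg1 F x < 3].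
  right; exists (F :\: [set p | p.1 == x]); last by apply: dense_delete1; rewrite ?deg_gt0.
  case/card_gt0P: deg_gt0 => y; rewrite inE => Fxy.
  by apply/properP; split; [exact: subsetDl | exists (x, y); rewrite // !inE eqxx].
have [/existsP[y /eqP deg_y]|no2] := boolP [exists y, deg2 F y == 1].
  have /card_gt0P[x] : 0 < deg2 F y by rewrite deg_y.
  rewrite inE => Fxy; right; exists (F :\ (x, y)); [exact: properD1 | exact: dense_delete2].
left=> x y Fxy; split.
  by move/existsPn: no1 => /(_ x); rewrite (deg1_gt0 Fxy) /= -leqNgt.
by move/existsPn: no2 => /(_ y); have := deg2_gt0 Fxy; case: (deg2 F y) => [|[|]].
Qed.

Lemma dense_core F :
  dense F -> exists2 G : {set T1 * T2}, G \subset F & dense G /\ core_degrees G.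
Proof.
elim: {F}_.+1 {-2}F (ltnSn #|F|) => // n IH F le_Fn dF.
case: (dense_shrink dF) => [coreF|[G ltGF dG]]; first by exists F.
have [H sHG [dH coreH]] := IH G (leq_trans (proper_card ltGF) le_Fn) dG.
by exists H => //; apply: subset_trans sHG (proper_sub ltGF).
Qed.

End Pruning.

Lemma ordS_neq k (i : 'I_k) : 1 < k -> ordS i != i.
Proof.
move=> k_gt1; apply/eqP => /(congr1 val) /=; move: (nat_of_ord i) (ltn_ord i) => j.
case: (ltngtP j.+1 k) k_gt1 => [lt_jk _ _|? _ ?|<- lt1j _].
- by rewrite modn_small //; lia.
- lia.
- by rewrite modnn; lia.
Qed.

Section BipCycle.
Variables (T1 T2 : finType) (X C : {set T1 * T2}) (k : nat).
Hypothesis bipC : bip_cycle X C k.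

Lemma bip_cycle_sub : C \subset X.
Proof. by case: bipC => _ [u [w [_ [_ []]]]]. Qed.

Lemma bip_cycleS (Y : {set T1 * T2}) : X \subset Y -> bip_cycle Y C k.
Proof.
case: bipC => k_gt1 [u [w [inj_u [inj_w [EC sCX]]]]] sXY.
by split=> //; exists u, w; do 3!split=> //; apply: subset_trans sCX sXY.
Qed.

Lemma bip_cycle_neq0 : C != set0.
Proof.
case: bipC => k_gt1 [u [w [_ [_ [-> _]]]]]; apply/set0Pn.
by exists (u (Ordinal k_gt1), w (Ordinal k_gt1)); rewrite !inE imset_f.
Qed.

Lemma deg2_bip_cycle_even y : ~~ odd (deg2 C y).
Proof.
case: bipC => k_gt1 [u [w [inj_u [inj_w [-> _]]]]]; rewrite /deg2.
have [/existsP[i /eqP wi]|no_y] := boolP [exists i, w i == y].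
  have -> : [set x | (x, y) \in cyc_edges u w] = [set u i; u (ordS i)].
    apply/setP => x; rewrite !inE -wi; apply/orP/orP.
      by case=> /imsetP[j _ [-> /inj_w ->]]; [left | right].
    by case=> /eqP ->; [left | right]; apply/imsetP; exists i.
  by rewrite cards2 (inj_eq inj_u) eq_sym (negPf (ordS_neq i k_gt1)).
suff -> : [set x | (x, y) \in cyc_edges u w] = set0 by rewrite cards0.
apply/setP => x; rewrite !inE; apply/negP => /orP[] /imsetP[j _ [_ wj]];
by move/existsPn: no_y => /(_ j); rewrite wj eqxx.
Qed.

End BipCycle.

Lemma deg2_setD (T1 T2 : finType) (X C : {set T1 * T2}) y :
  C \subset X -> deg2 (X :\: C) y = deg2 X y - deg2 C y.
Proof.
move=> /subsetP sCX; rewrite /deg2 -cardsDS; last by apply/subsetP => x; rewrite !inE => /sCX.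
by apply: eq_card => x; rewrite !inE.
Qed.

Lemma odd_deg2_setD_cycle (T1 T2 : finType) (X H C : {set T1 * T2}) k y :
  bip_cycle X C k -> C \subset H -> odd (deg2 (H :\: C) y) = odd (deg2 H y).
Proof.
move=> bipC sCH; rewrite deg2_setD // oddB ?deg2S //.
by rewrite (negPf (deg2_bip_cycle_even bipC y)) addbF.
Qed.

Lemma card_deg2 (T1 T2 : finType) (R : {set T1 * T2}) : #|R| = \sum_y deg2 R y.
Proof.
rewrite -sum1_card (eq_bigl (fun p => (p.1, p.2) \in R)) => [|[]//].
rewrite -(pair_big_dep xpredT (fun x y => (x, y) \in R) (fun _ _ => 1)).
rewrite (exchange_big_dep xpredT) //=.
by apply: eq_bigr => y _; rewrite sum1dep_card.
Qed.

Lemma vertices2_n2odd (T1 T2 : finType) (R : {set T1 * T2}) :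
  2 * #|vertices2 R| <= #|R| + n2odd R.
Proof.
rewrite /n2odd /vertices2 -!sum1dep_card card_deg2 big_distrr.
rewrite (big_mkcond (fun y => 0 < _)) (big_mkcond (fun y => odd _)) -big_split /=.
by apply: leq_sum => y _; case: (deg2 R y) => [|[|d]].
Qed.

Lemma peel_short_cycles (T1 T2 : finType) (E H : {set T1 * T2}) : H \subset E ->
  exists P : {set {set T1 * T2}},
    [/\ trivIset P,
        {in P, forall C, exists k, bip_cycle E C k /\ k <= trunc_log 2 (#|T1| ^ 2)},
        cover P \subset H,
        #|H :\: cover P| <= 2 * #|T1| + #|vertices2 (H :\: cover P)|
      & forall y, odd (deg2 (H :\: cover P) y) = odd (deg2 H y)].
Proof.
elim: {H}_.+1 {-2}H (ltnSn #|H|) => // n IH H le_Hn sHE.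
have [small|big] := leqP #|H| (2 * #|T1| + #|vertices2 H|).
  exists set0; rewrite /cover big_set0 setD0 sub0set; split=> // [|C]; last by rewrite inE.
  by rewrite /trivIset /cover !big_set0 cards0.
have [F sFH [dF coreF]] : exists2 F : {set T1 * T2}, F \subset H & dense F /\ core_degrees F.
  by apply: dense_core; have := max_card (vertices1 H); rewrite /dense; lia.
have [[x0 y0] Fxy0] : exists p, p \in F by apply/card_gt0P; move: dF; rewrite /dense; lia.
have [C [k [bipC k_le]]] := short_bip_cycle coreF Fxy0.
have sCH : C \subset H := subset_trans (bip_cycle_sub bipC) sFH.
have lt_HCn : #|H :\: C| < n.
  by rewrite cardsDS //; have := bip_cycle_neq0 bipC; rewrite -card_gt0; lia.
have [P [trivP cycP covP sizeP oddP]] := IH _ lt_HCn (subset_trans (subsetDl _ _) sHE).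
have disjC : {in P, forall B : {set T1 * T2}, [disjoint C & B]}.
  move=> B PB; rewrite -setI_eq0; apply/eqP/setP => p; rewrite !inE.
  apply/negP => /andP[Cp Bp]; have /(subsetP covP) : p \in cover P by apply/bigcupP; exists B.
  by rewrite inE Cp.
have P_neq0 : set0 \notin P by apply/negP => /cycP[k' [/bip_cycle_neq0 /eqP]].
have [trivCP notPC] := trivIsetU1 disjC trivP P_neq0.
exists (C |: P); rewrite /cover big_setU1 //= -/(cover P) -setDDl; split=> //.
- move=> C' /setU1P[->|/cycP //]; exists k.
  have sFE : F \subset E by apply: subset_trans sFH sHE.
  exact: (conj (bip_cycleS bipC sFE) k_le).
- by rewrite subUset sCH (subset_trans covP (subsetDl _ _)).
- by move=> y; rewrite oddP (odd_deg2_setD_cycle y bipC sCH).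
Qed.

Theorem lemmaA3 (T1 T2 : finType) (E : {set T1 * T2}) :
  1 <= #|T1| -> #|T1| <= #|T2| ->
  exists P : {set {set T1 * T2}},
    trivIset P /\
    (forall C, C \in P -> exists k, bip_cycle E C k /\
                           2 * k <= 2 * trunc_log 2 (#|T1| ^ 2)) /\
    #|E :\: cover P| <= minn (2 * #|T1| + #|T2|) (4 * #|T1| + n2odd E).
Proof.
move=> _ _; have [P [trivP cycP _ sizeP oddP]] := peel_short_cycles (subxx E).
exists P; split=> //; split.
  by move=> C /cycP[k [bipC k_le]]; exists k; rewrite leq_mul2l k_le orbT.
set R := E :\: cover P in sizeP oddP *.
have n2odd_R : n2odd R = n2odd E by apply: eq_card => y; rewrite !inE oddP.
have := vertices2_n2odd R; have := max_card (vertices2 R).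
by rewrite leq_min n2odd_R; lia.
Qed.
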